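(* Consider the setting described in the context, but where the participation rate, delivery rate, reserve price and demand price may additionally depend on the state $s_t$ of the desired load trajectory (so the user transition probabilities and per-step costs depend on $s_t$). For $m\in\mathcal{M}$, $s\in\mathcal{S}$ define $V$ by $$V(m,s)=\min_{g^r,g^d\in\{1,\dots,k\}}\Big(\ell(m,s,g^r,g^d)+\beta\sum_{\hat m\in\mathcal{M}}\mathbb{P}(\hat m\mid m,s,g^r,g^d)\,V(\hat m,f(s))\Big),$$ where $\ell$ is the per-step cost $\frac1n\big(\sum_i c(x^i_t,u^i_t,m_t)+D(m_t,\theta_t)\big)$ expressed as a function of $(m_t,s_t,g^r_t,g^d_t)$ and $\mathbb{P}(\hat m\mid m,s,g^r,g^d)$ is the probability that $m_{t+1}=\hat m$ given $m_t=m$, $s_t=s$, reserve action $g^r$ and demand action $g^d$. If $(\mathfrak{g}^{r,*}(m,s),\mathfrak{g}^{d,*}(m,s))$ is a minimizer, then $u^{i,*}_t=\mathbb{1}(x^i_t=0)\mathfrak{g}^{r,*}(m_t,s_t)+\mathbb{1}(x^i_t=1)\mathfrak{g}^{d,*}(m_t,s_t)$ is an optimal control law, i.e. its strategy $g^*$ satisfies $J(g^* )\le J(g)$ for all admissible strategies $g$.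
   Context: Base setting: $n\in\mathbb{N}$ users, demand probability $p\in(0,1)$, $k$ options $\{1,\dots,k\}$. User $i$ has state $x^i_t\in\{0,1\}$; mean-field $m_t=\frac1n\sum_i\mathbb{1}(x^i_t=1)\in\mathcal{M}:=\{0,\frac1n,\dots,1\}$. A desired load trajectory is given by a set $\mathcal{S}$, maps $f:\mathcal{S}\to\mathcal{S}$, $h:\mathcal{S}\to[0,1]$, known $s_1$, $s_{t+1}=f(s_t)$, $\theta_t=h(s_t)$. Each option $u$ has participation rate $\alpha(u)\in[0,1]$, delivery rate $q(u,m)\in(0,1]$, reserve price $c_r(u,1-m)\ge0$, demand price $c_d(u,m)\ge0$ (in the corollary these may also depend on $s_t$). Given option $u^i_t$ and $m_t$: $\mathbb{P}(x^i_{t+1}=1\mid x^i_t=0,\cdot)=(1-\alpha(u^i_t))p$, $\mathbb{P}(x^i_{t+1}=0\mid x^i_t=1,\cdot)=q(u^i_t,m_t)$ (complements otherwise), users' transitions conditionally independent given current joint states and actions. Per-user cost $c(x,u,m)=\mathbb{1}(x=0)c_r(u,1-m)+\mathbb{1}(x=1)c_d(u,m)$. $D:\mathcal{M}\times[0,1]\to\mathbb{R}_{\ge0}$ is a distance function and $\beta\in(0,1)$. Admissible strategies: $u^i_t=g_t(x^i_t,m_{1:t})$, $g_t:\{0,1\}\times\mathcal{M}^t\to\{1,\dots,k\}$, common to all users; reserve action $g^r_t=g_t(0,m_{1:t})$, demand action $g^d_t=g_t(1,m_{1:t})$. Cost $J(g)=\mathbb{E}^g\big[\sum_{t=1}^\infty\beta^{t-1}\frac1n\big(\sum_i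 c(x^i_t,u^i_t,m_t)+D(m_t,\theta_t)\big)\big]$. *)

From HB Require Import structures.
From mathcomp Require Import all_boot all_order all_algebra.
From mathcomp Require Import boolp classical_sets reals ereal topology normedtype sequences.
Set Implicit Arguments. Unset Strict Implicit. Unset Printing Implicit Defensive.
Import Order.TTheory GRing.Theory Num.Theory.
Local Open Scope ring_scope.

(* Options are 'I_k ({1..k} shifted to {0..k-1}); S is the set of states of
   the desired load trajectory. *)
Record model (R : realType) (S : Type) (k : nat) := Model {
  dem_p  : R;
  disc   : R;
  alpha  : S -> 'I_k -> R;
  deliv  : S -> 'I_k -> R -> R;
  c_res  : S -> 'I_k -> R -> R;    (* reserve price c_r(s,u,1-m) (3rd arg is 1-m) *)
  c_dem  : S -> 'I_k -> R -> R;
  dist   : R -> R -> R;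
  f_traj : S -> S;
  h_traj : S -> R;
  s_init : S
}.

(* joint state of the n users: x i = true  <->  x^i = 1 *)
Notation state n := {ffun 'I_n -> bool}.

(* the mean field m = j/n is represented by the count j : 'I_n.+1 *)
Definition mval (R : realType) (n : nat) (j : 'I_n.+1) : R := j%:R / n%:R.

Definition count (n : nat) (x : state n) : 'I_n.+1 := inord #|[set i | x i]|.

(* time is 0-indexed: time t here is time t+1 of the paper *)
Definition s_at R S k (M : model R S k) (t : nat) : S := iter t (f_traj M) (s_init M).
Definition theta R S k (M : model R S k) (t : nat) : R := h_traj M (s_at M t).

(* admissible strategies: u^i_t = g t x^i_t m_{1:t}, the history m_{1:t}
   being given as the sequence of mean fields (of length t+1, 0-indexed) *)
Definition strategy (n k : nat) := nat -> bool -> seq 'I_n.+1 -> 'I_k.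

Definition user_trans R S k (M : model R S k) (s : S) (u : 'I_k) (m : R)
  (x y : bool) : R :=
  match x, y with
  | false, true  => (1 - alpha M s u) * dem_p M
  | false, false => 1 - (1 - alpha M s u) * dem_p M
  | true, false  => deliv M s u m
  | true, true   => 1 - deliv M s u m
  end.

Definition cost R S k (M : model R S k) (s : S) (x : bool) (u : 'I_k) (m : R) : R :=
  if x then c_dem M s u m else c_res M s u (1 - m).

Definition joint_trans R S n k (M : model R S k) (g : strategy n k) (t : nat)
  (hist : seq 'I_n.+1) (x y : state n) : R :=
  \prod_(i < n) user_trans M (s_at M t) (g t (x i) hist) (mval R (count x)) (x i) (y i).

Definition stage_cost R S n k (M : model R S k) (g : strategy n k) (t : nat)
  (hist : seq 'I_n.+1) (x : state n) : R :=
  n%:R^-1 * (\sum_(i < n) cost M (s_at M t) (x i) (g t (x i) hist) (mval R (count x))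
             + dist M (mval R (count x)) (theta M t)).

(* expected cost at time tau + N, given state x and history hist at time tau *)
Fixpoint exp_cost_from R S n k (M : model R S k) (g : strategy n k) (N tau : nat)
  (x : state n) (hist : seq 'I_n.+1) : R :=
  match N with
  | 0 => stage_cost M g tau hist x
  | N'.+1 => \sum_(y : state n) joint_trans M g tau hist x y *
               exp_cost_from M g N' tau.+1 y (rcons hist (count y))
  end.

Definition Ecost R S n k (M : model R S k) (P0 : state n -> R) (g : strategy n k)
  (t : nat) : R :=
  \sum_(x : state n) P0 x * exp_cost_from M g t 0 x [:: count x].

Definition J R S n k (M : model R S k) (P0 : state n -> R) (g : strategy n k) : \bar R :=
  (\sum_(0 <= t <oo) ((disc M ^+ t * Ecost M P0 g t)%:E))%E.

Definition ell R S n k (M : model R S k) (s : S) (j : 'I_n.+1) (gr gd : 'I_k) : R :=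
  (1 - mval R j) * c_res M s gr (1 - mval R j) + mval R j * c_dem M s gd (mval R j)
  + n%:R^-1 * dist M (mval R j) (h_traj M s).

Definition binom_pmf (R : realType) (N a : nat) (r : R) : R :=
  'C(N, a)%:R * r ^+ a * (1 - r) ^+ (N - a).

(* P(m_{t+1} = j'/n | m_t = j/n, s_t = s, g^r, g^d): the new number of users
   in state 1 is Bin(n-j, (1-alpha(s,g^r))p) + Bin(j, 1-q(s,g^d,m)),
   the two binomials being independent. *)
Definition mf_trans R S n k (M : model R S k) (s : S) (j : 'I_n.+1) (gr gd : 'I_k)
  (j' : 'I_n.+1) : R :=
  \sum_(a < n.+1) \sum_(b < n.+1)
    (if (a + b == j')%N
     then binom_pmf (n - j) a ((1 - alpha M s gr) * dem_p M)
          * binom_pmf j b (1 - deliv M s gd (mval R j))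
     else 0).

Definition bellman_rhs R S n k (M : model R S k) (V : 'I_n.+1 -> S -> R)
  (j : 'I_n.+1) (s : S) (gr gd : 'I_k) : R :=
  ell M s j gr gd + disc M * \sum_(j' : 'I_n.+1) mf_trans M s j gr gd j' * V j' (f_traj M s).

(* u^{i,*}_t = 1(x=0) g^{r,*}(m_t,s_t) + 1(x=1) g^{d,*}(m_t,s_t),
   m_t being the last entry of the history *)
Definition g_star R S n k (M : model R S k) (gr gd : 'I_n.+1 -> S -> 'I_k)
  : strategy n k :=
  fun t x hist => let j := last ord0 hist in
    if x then gd j (s_at M t) else gr j (s_at M t).

From Pilot Require Import Defs.
From HB Require Import structures.
From mathcomp Require Import all_boot all_order all_algebra.
From mathcomp Require Import boolp classical_sets reals ereal topology normedtype sequences.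
From mathcomp Require Import ring lra.
Set Implicit Arguments. Unset Strict Implicit. Unset Printing Implicit Defensive.
Import Order.TTheory GRing.Theory Num.Theory.
Import numFieldNormedType.Exports.
Local Open Scope ring_scope.

(* Because every user applies the same strategy, the per-step cost depends on
   the joint state only through the number j of users in state 1 (it is ell),
   and, by the factorisation of the generating polynomial of the joint kernel
   into one Bernoulli polynomial per user, the law of the next count is the
   convolution of two binomials, i.e. mf_trans.  Iterating the Bellman
   inequality V <= bellman_rhs N times along an arbitrary strategy g gives
     V(m_1, s_1) <= sum_{t<N} beta^t E^g[cost_t] + beta^N E^g[V(m_{N+1}, s_{N+1})],
   with equality for g_star, whose actions attain the minimum.  Averaging over the
   initial law and letting N -> oo (V bounded, beta < 1) yields
   J(g_star) = E[V(m_1, s_1)] <= J(g). *)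

Lemma count_ffun_le n (y : {ffun 'I_n -> bool}) : (#|[set i | y i]| <= n)%N.
Proof. by rewrite -[X in (_ <= X)%N]card_ord max_card. Qed.

Lemma count_ffunE n (y : {ffun 'I_n -> bool}) :
  Defs.count y = #|[set i | y i]| :> nat.
Proof. by rewrite inordK // ltnS count_ffun_le. Qed.

Lemma card_ffun_true n (y : {ffun 'I_n -> bool}) :
  #|[pred i | y i]| = Defs.count y.
Proof. by rewrite count_ffunE cardsE. Qed.

Lemma card_ffun_false n (y : {ffun 'I_n -> bool}) :
  #|[pred i | ~~ y i]| = (n - Defs.count y)%N.
Proof.
rewrite -card_ffun_true -[n in (n - _)%N]card_ord -(cardC [pred i | y i]) addKn.
by apply: eq_card => i; rewrite !inE.
Qed.

Section GeneratingPolynomial.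
Variable R : comNzRingType.

Lemma sum_nat_eq_inord n d (phi : 'I_n.+1 -> R) : (d <= n)%N ->
  \sum_(c < n.+1) ((c : nat) == d)%:R * phi c = phi (inord d).
Proof.
move=> le_dn; rewrite (bigD1 (inord d)) //= inordK // eqxx mul1r big1 ?addr0 //.
move=> c ne_cd; rewrite (_ : (c : nat) == d = false) ?mul0r //.
by apply/negbTE; apply: contra ne_cd => /eqP <-; rewrite inord_val.
Qed.

Lemma prod_bernoulli_polyE n (w : 'I_n -> bool -> R) :
  \prod_(i < n) ((w i false)%:P + w i true *: 'X)
  = \sum_(y : {ffun 'I_n -> bool}) (\prod_i w i (y i)) *: 'X^(Defs.count y).
Proof.
transitivity (\prod_(i < n) \sum_(b : bool) w i b *: 'X^b).
  by apply: eq_bigr => i _; rewrite big_bool /= expr0 expr1 alg_polyC addrC.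
rewrite (bigA_distr_bigA (fun i (b : bool) => w i b *: 'X^b)).
apply: eq_bigr => y _; rewrite scaler_prod prodrXr; congr (_ *: 'X^_).
rewrite count_ffunE cardsE -sum1_card [RHS]big_mkcond /=.
by apply: eq_bigr => i _; change (y i = (if y i then 1 else 0)%N :> nat); case: (y i).
Qed.

Lemma sum_ffun_prod_count n (w : 'I_n -> bool -> R) (phi : 'I_n.+1 -> R) :
  \sum_(y : {ffun 'I_n -> bool}) (\prod_i w i (y i)) * phi (Defs.count y)
  = \sum_(c < n.+1) (\prod_(i < n) ((w i false)%:P + w i true *: 'X))`_c * phi c.
Proof.
rewrite prod_bernoulli_polyE.
under [RHS]eq_bigr => c _ do rewrite coef_sum mulr_suml.
rewrite [RHS]exchange_big /=; apply: eq_bigr => y _.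
under [RHS]eq_bigr => c _ do rewrite coefZ coefXn -mulrA.
by rewrite -mulr_sumr sum_nat_eq_inord ?count_ffunE ?count_ffun_le // -count_ffunE inord_val.
Qed.

Lemma sum_ord_addn_eq n (F : 'I_n.+1 -> R) a c : (c <= n)%N ->
  \sum_(b < n.+1) (if (a + b == c)%N then F b else 0)
  = if (a <= c)%N then F (inord (c - a)) else 0.
Proof.
move=> le_cn; rewrite -big_mkcond /=; case: leqP => [le_ac|lt_ca].
  have lt_c_a_n : (c - a < n.+1)%N by rewrite ltnS (leq_trans (leq_subr _ _)).
  apply: big_pred1 => b /=; rewrite -(inj_eq val_inj) /= inordK //.
  by rewrite -(eqn_add2l a b (c - a)) subnKC.
by rewrite big_pred0 // => b; rewrite gtn_eqF // (leq_trans lt_ca) ?leq_addr.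
Qed.

Lemma coefM_bounded n c (p q : {poly R}) : (c <= n)%N ->
  (p * q)`_c = \sum_(a < n.+1) \sum_(b < n.+1)
                 (if (a + b == c)%N then p`_a * q`_b else 0).
Proof.
move=> le_cn; rewrite coefM.
under [RHS]eq_bigr => a _ do rewrite (sum_ord_addn_eq (fun b => p`_a * q`_b)) //.
rewrite -big_mkcond (big_ord_widen n.+1 (fun a => p`_a * q`_(c - a))) ?ltnS //=.
by apply: eq_bigr => a le_ac; rewrite inordK // ltnS (leq_trans (leq_subr _ _)).
Qed.

End GeneratingPolynomial.

Lemma coef_bernoulli_expn (R : realType) N a (r : R) :
  (((1 - r)%:P + r *: 'X) ^+ N)`_a = binom_pmf N a r.
Proof.
rewrite exprDn coef_sum /binom_pmf.
under eq_bigr => i _ do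
  rewrite -rmorphXn exprZn -scalerAr coefMn coefZ mul_polyC coefZ coefXn.
have [lt_aN1|le_N1a] := ltnP a N.+1; last first.
  rewrite bin_small // mul0r mul0r big1 // => i _.
  by rewrite gtn_eqF ?mulr0 ?mul0r ?mul0rn // (leq_trans (ltn_ord i)).
rewrite (bigD1 (Ordinal lt_aN1)) //= eqxx mulr1n mulr1 big1 ?addr0 => [|i ne_ia].
  by rewrite -[LHS]mulr_natl mulrA.
rewrite (_ : a == i = false) ?mulr0 ?mul0r ?mul0rn //.
by apply/negbTE; apply: contra ne_ia => /eqP eq_ai; apply/eqP/val_inj.
Qed.

Lemma ler_norm_convex_comb (R : numDomainType) (I : finType) (w f : I -> R) (B : R) :
  (forall i, 0 <= w i) -> \sum_i w i = 1 -> (forall i, `|f i| <= B) ->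
  `|\sum_i w i * f i| <= B.
Proof.
move=> w_ge0 w_sum1 f_le; rewrite -[B]mul1r -w_sum1 mulr_suml.
apply: le_trans (ler_norm_sum _ _ _) _; apply: ler_sum => i _.
by rewrite normrM ger0_norm // ler_wpM2l.
Qed.

Section GeometricTail.
Variables (R : realType) (d : R).
Hypothesis d01 : 0 <= d < 1.
Local Open Scope classical_set_scope.

Lemma limn_EFin_cvg (f : nat -> R) (v : R) :
  f @ \oo --> v -> limn (EFin \o f) = v%:E.
Proof. by move=> f_cvg; rewrite EFin_lim ?(cvg_lim _ f_cvg) //; apply/cvg_ex; exists v. Qed.

Lemma cvg_geometric_tail (v c : R) : (fun N => v + d ^+ N * c) @ \oo --> v.
Proof.
have /andP[d_ge0 d_lt1] := d01.
rewrite -[X in _ --> X]addr0 -(mul0r c).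
apply: cvgD; first exact: cvg_cst.
by apply: cvgM; [apply: cvg_expr; rewrite ger0_norm | exact: cvg_cst].
Qed.

Lemma eseries_eq_of_geometric_bound (a : nat -> R) (v c : R) :
  (forall N, `|\sum_(t < N) a t - v| <= d ^+ N * c) ->
  (\sum_(0 <= t <oo) (a t)%:E = v%:E)%E.
Proof.
move=> a_near.
have partial_cvg : (fun N => \sum_(t < N) a t) @ \oo --> v.
  apply: (squeeze_cvgr _ (@cvg_geometric_tail v (- c)) (@cvg_geometric_tail v c)).
  near=> N; have := a_near N; rewrite ler_norml mulrN => /andP[lo hi].
  by apply/andP; split; lra.
have -> : (fun N => \sum_(0 <= t < N) (a t)%:E)%E = EFin \o (fun N => \sum_(t < N) a t).
  by apply: funext => N; rewrite /= sumEFin big_mkord.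
exact: limn_EFin_cvg.
Unshelve. all: end_near.
Qed.

Lemma eseries_ge_of_geometric_bound (a : nat -> R) (v c : R) :
  (forall t, 0 <= a t) -> (forall N, v - d ^+ N * c <= \sum_(t < N) a t) ->
  (v%:E <= \sum_(0 <= t <oo) (a t)%:E)%E.
Proof.
move=> a_ge0 a_lb; rewrite -(limn_EFin_cvg (@cvg_geometric_tail v (- c))).
apply: lime_le.
  by apply/cvg_ex; exists v%:E; apply: cvg_comp (@cvg_geometric_tail v (- c)) _.
near=> N; apply: le_trans (nneseries_lim_ge N _); last by move=> t _ _; rewrite lee_fin.
by rewrite /= sumEFin big_mkord lee_fin mulrN.
Unshelve. all: end_near.
Qed.

End GeometricTail.

Section Model.
Variables (R : realType) (S : Type) (n k : nat) (M : model R S k).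

Lemma user_trans_false s u m x :
  user_trans M s u m x false = 1 - user_trans M s u m x true.
Proof. by case: x => //=; rewrite opprB addrC subrK. Qed.

Lemma sum_joint_trans (g : strategy n k) t hist (x : state n) :
  \sum_(y : state n) joint_trans M g t hist x y = 1.
Proof.
rewrite /joint_trans -(bigA_distr_bigA (fun i (b : bool) =>
  user_trans M (s_at M t) (g t (x i) hist) (mval R (Defs.count x)) (x i) b)).
by apply: big1 => i _; rewrite big_bool /= user_trans_false subrKC.
Qed.

Lemma sum_joint_trans_count (g : strategy n k) t hist (x : state n)
    (phi : 'I_n.+1 -> R) :
  \sum_(y : state n) joint_trans M g t hist x y * phi (Defs.count y)
  = \sum_(j : 'I_n.+1) mf_trans M (s_at M t) (Defs.count x)
                         (g t false hist) (g t true hist) j * phi j.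
Proof.
set s := s_at M t; set m := mval R (Defs.count x).
rewrite /joint_trans (sum_ffun_prod_count
  (fun i b => user_trans M s (g t (x i) hist) m (x i) b)).
apply: eq_bigr => c _; congr (_ * _).
set r := (1 - alpha M s (g t false hist)) * dem_p M.
set q := deliv M s (g t true hist) m.
(* users in state 1 leave with probability q, users in state 0 join with
   probability r; the two groups contribute two binomial factors *)
under eq_bigr => i _ do rewrite user_trans_false.
rewrite (bigID (fun i => x i)) /=.
rewrite (eq_bigr (fun _ => (1 - (1 - q))%:P + (1 - q) *: 'X)); last by move=> i ->.
rewrite [X in _ * X](eq_bigr (fun _ => (1 - r)%:P + r *: 'X)); last first.
  by move=> i /negbTE ->.
rewrite !prodr_const card_ffun_true card_ffun_false mulrC.
rewrite (coefM_bounded _ _ (leq_ord c)); apply: eq_bigr => a _; apply: eq_bigr => b _.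
by rewrite !coef_bernoulli_expn.
Qed.

Lemma stage_costE (g : strategy n k) t hist (x : state n) : (0 < n)%N ->
  stage_cost M g t hist x
  = ell M (s_at M t) (Defs.count x) (g t false hist) (g t true hist).
Proof.
move=> n_gt0; rewrite /stage_cost /ell /theta (bigID (fun i => x i)) /=.
set s := s_at M t; set j := Defs.count x.
rewrite (eq_bigr (fun _ => c_dem M s (g t true hist) (mval R j))); last by move=> i ->.
rewrite [\sum_(i < n | ~~ x i) _](eq_bigr (fun _ => c_res M s (g t false hist) (1 - mval R j)));
  last by move=> i /negbTE ->.
rewrite !sumr_const card_ffun_true card_ffun_false -/j /mval.
have le_jn : (j <= n)%N := leq_ord j.
rewrite -[c_dem _ _ _ _ *+ _]mulr_natl -[c_res _ _ _ _ *+ _]mulr_natl natrB //.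
move: (c_dem _ _ _ _) (c_res _ _ _ _) (dist _ _ _) => cd cr d.
field; by rewrite pnatr_eq0 -lt0n.
Qed.

Lemma bellman_rhs_strategy (g : strategy n k) (V : 'I_n.+1 -> S -> R) t hist
    (x : state n) : (0 < n)%N ->
  bellman_rhs M V (Defs.count x) (s_at M t) (g t false hist) (g t true hist)
  = stage_cost M g t hist x + disc M * \sum_(y : state n)
      joint_trans M g t hist x y * V (Defs.count y) (s_at M t.+1).
Proof.
move=> n_gt0; rewrite /bellman_rhs stage_costE //.
by rewrite (sum_joint_trans_count g t hist x (fun j => V j (s_at M t.+1))).
Qed.

Definition bellman_subsolution (V : 'I_n.+1 -> S -> R) :=
  forall j s gr gd, V j s <= bellman_rhs M V j s gr gd.

Definition bellman_greedy (g : strategy n k) (V : 'I_n.+1 -> S -> R) :=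
  forall t hist (x : state n), last ord0 hist = Defs.count x ->
    V (Defs.count x) (s_at M t)
    = bellman_rhs M V (Defs.count x) (s_at M t) (g t false hist) (g t true hist).

Lemma g_star_bellman_greedy (V : 'I_n.+1 -> S -> R)
    (gr_star gd_star : 'I_n.+1 -> S -> 'I_k) :
  bellman_subsolution V ->
  (forall j s, exists gr gd, V j s = bellman_rhs M V j s gr gd) ->
  (forall j s gr gd, bellman_rhs M V j s (gr_star j s) (gd_star j s)
                     <= bellman_rhs M V j s gr gd) ->
  bellman_greedy (g_star M gr_star gd_star) V.
Proof.
move=> V_le V_attained rhs_min t hist x last_hist; rewrite /g_star /= last_hist.
apply/le_anti; rewrite V_le /=.
have [gr [gd V_eq]] := V_attained (Defs.count x) (s_at M t).
by rewrite [X in _ <= X]V_eq rhs_min.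
Qed.

Section TransitionProbabilities.
Hypothesis dem_p01 : 0 <= dem_p M <= 1.
Hypothesis alpha01 : forall s u, 0 <= alpha M s u <= 1.
Hypothesis deliv01 : forall s u (j : 'I_n.+1), 0 <= deliv M s u (mval R j) <= 1.

Lemma user_trans_ge0 s u (j : 'I_n.+1) x y : 0 <= user_trans M s u (mval R j) x y.
Proof.
have /andP[p_ge0 p_le1] := dem_p01; have /andP[a_ge0 a_le1] := alpha01 s u.
have /andP[q_ge0 q_le1] := deliv01 s u j.
by case: x; case: y => /=; nra.
Qed.

Lemma joint_trans_ge0 (g : strategy n k) t hist (x y : state n) :
  0 <= joint_trans M g t hist x y.
Proof. by apply: prodr_ge0 => i _; apply: user_trans_ge0. Qed.

Section NonnegativeCosts.
Hypothesis c_res_ge0 : forall s u (j : 'I_n.+1), 0 <= c_res M s u (1 - mval R j).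
Hypothesis c_dem_ge0 : forall s u (j : 'I_n.+1), 0 <= c_dem M s u (mval R j).
Hypothesis dist_ge0 :
  forall (j : 'I_n.+1) th, 0 <= th <= 1 -> 0 <= dist M (mval R j) th.
Hypothesis h_traj01 : forall s, 0 <= h_traj M s <= 1.

Lemma stage_cost_ge0 (g : strategy n k) t hist (x : state n) :
  0 <= stage_cost M g t hist x.
Proof.
apply: mulr_ge0; first by rewrite invr_ge0.
apply: addr_ge0; last exact/dist_ge0/h_traj01.
by apply: sumr_ge0 => i _; rewrite /cost; case: (x i).
Qed.

Lemma exp_cost_from_ge0 (g : strategy n k) N t (x : state n) hist :
  0 <= exp_cost_from M g N t x hist.
Proof.
elim: N t x hist => [|N IHN] t x hist /=; first exact: stage_cost_ge0.
by apply: sumr_ge0 => y _; rewrite mulr_ge0 ?joint_trans_ge0.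
Qed.

Lemma Ecost_ge0 (P0 : state n -> R) (g : strategy n k) t :
  (forall x, 0 <= P0 x) -> 0 <= Ecost M P0 g t.
Proof. by move=> P0_ge0; apply: sumr_ge0 => x _; rewrite mulr_ge0 ?exp_cost_from_ge0. Qed.

End NonnegativeCosts.

Section Verification.
Variables (g : strategy n k) (V : 'I_n.+1 -> S -> R).

Fixpoint exp_value_from N t (x : state n) (hist : seq 'I_n.+1) : R :=
  match N with
  | 0 => V (Defs.count x) (s_at M t)
  | N'.+1 => \sum_(y : state n) joint_trans M g t hist x y *
               exp_value_from N' t.+1 y (rcons hist (Defs.count y))
  end.

Definition truncated_cost N t (x : state n) hist : R :=
  \sum_(i < N) disc M ^+ i * exp_cost_from M g i t x hist
  + disc M ^+ N * exp_value_from N t x hist.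

Lemma truncated_cost0 t (x : state n) hist :
  truncated_cost 0 t x hist = V (Defs.count x) (s_at M t).
Proof. by rewrite /truncated_cost big_ord0 expr0 mul1r add0r. Qed.

Lemma truncated_costS N t (x : state n) hist :
  truncated_cost N.+1 t x hist
  = stage_cost M g t hist x + disc M * \sum_(y : state n)
      joint_trans M g t hist x y * truncated_cost N t.+1 y (rcons hist (Defs.count y)).
Proof.
rewrite /truncated_cost big_ord_recl /= expr0 mul1r -addrA; congr (_ + _).
under eq_bigr => i _ do rewrite exprS -mulrA /= mulr_sumr.
rewrite -mulr_sumr exprS -mulrA -mulrDr; congr (disc M * _).
rewrite exchange_big mulr_sumr -big_split /=; apply: eq_bigr => y _.
rewrite mulrDr mulr_sumr mulrCA; congr (_ + _).
by apply: eq_bigr => i _; rewrite add0n mulrCA.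
Qed.

Lemma norm_exp_value_from_le B : (forall j s, `|V j s| <= B) ->
  forall N t (x : state n) hist, `|exp_value_from N t x hist| <= B.
Proof.
move=> V_le; elim=> [|N IHN] t x hist /=; first exact: V_le.
apply: ler_norm_convex_comb => [y||y].
- exact: joint_trans_ge0.
- exact: sum_joint_trans.
- exact: IHN.
Qed.

Hypothesis n_gt0 : (0 < n)%N.

Lemma value_le_truncated_cost : 0 <= disc M -> bellman_subsolution V ->
  forall N t (x : state n) hist, V (Defs.count x) (s_at M t) <= truncated_cost N t x hist.
Proof.
move=> disc_ge0 V_le; elim=> [|N IHN] t x hist; first by rewrite truncated_cost0.
rewrite truncated_costS; apply: le_trans (V_le _ _ (g t false hist) (g t true hist)) _.
rewrite bellman_rhs_strategy // lerD2l ler_wpM2l // ler_sum // => y _.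
by rewrite ler_wpM2l ?joint_trans_ge0.
Qed.

Lemma value_eq_truncated_cost : bellman_greedy g V ->
  forall N t (x : state n) hist, last ord0 hist = Defs.count x ->
    V (Defs.count x) (s_at M t) = truncated_cost N t x hist.
Proof.
move=> V_eq; elim=> [|N IHN] t x hist last_hist; first by rewrite truncated_cost0.
rewrite truncated_costS (V_eq _ hist) // bellman_rhs_strategy //.
congr (_ + disc M * _).
by apply: eq_bigr => y _; rewrite -IHN ?last_rcons.
Qed.

Section InitialDistribution.
Variables (P0 : state n -> R) (B : R).
Hypotheses (P0_ge0 : forall x, 0 <= P0 x) (P0_sum1 : \sum_x P0 x = 1).
Hypothesis V_bounded : forall j s, `|V j s| <= B.

Definition initial_value := \sum_(x : state n) P0 x * V (Defs.count x) (s_init M).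

Lemma discounted_Ecost_sumE N :
  \sum_(t < N) disc M ^+ t * Ecost M P0 g t
  = \sum_x P0 x * truncated_cost N 0 x [:: Defs.count x]
    - disc M ^+ N * \sum_x P0 x * exp_value_from N 0 x [:: Defs.count x].
Proof.
rewrite /truncated_cost /Ecost.
under eq_bigr => t _ do rewrite mulr_sumr.
rewrite exchange_big mulr_sumr -sumrB; apply: eq_bigr => x _.
rewrite mulrDr mulr_sumr mulrCA addrK; apply: eq_bigr => t _; exact: mulrCA.
Qed.

Lemma norm_mean_exp_value_le N :
  `|\sum_x P0 x * exp_value_from N 0 x [:: Defs.count x]| <= B.
Proof. by apply: ler_norm_convex_comb => // x; apply: norm_exp_value_from_le. Qed.

Lemma discounted_Ecost_ge : 0 <= disc M -> bellman_subsolution V ->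
  forall N, initial_value - disc M ^+ N * B <= \sum_(t < N) disc M ^+ t * Ecost M P0 g t.
Proof.
move=> disc_ge0 V_le N; rewrite discounted_Ecost_sumE lerB //.
  by apply: ler_sum => x _; rewrite ler_wpM2l ?P0_ge0 ?(value_le_truncated_cost _ _ _ 0).
by rewrite ler_wpM2l ?exprn_ge0 // (le_trans (ler_norm _)) ?norm_mean_exp_value_le.
Qed.

Lemma discounted_Ecost_dist : 0 <= disc M -> bellman_greedy g V ->
  forall N, `|\sum_(t < N) disc M ^+ t * Ecost M P0 g t - initial_value| <= disc M ^+ N * B.
Proof.
move=> disc_ge0 V_eq N; rewrite discounted_Ecost_sumE.
rewrite (eq_bigr (fun x => P0 x * V (Defs.count x) (s_init M))); last first.
  by move=> x _; rewrite -value_eq_truncated_cost.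
rewrite addrAC subrr add0r normrN normrM ger0_norm ?exprn_ge0 //.
by rewrite ler_wpM2l ?exprn_ge0 ?norm_mean_exp_value_le.
Qed.

End InitialDistribution.

End Verification.

End TransitionProbabilities.

End Model.

Theorem corollary1 (R : realType) (S : Type) (n k : nat) (M : model R S k)
  (P0 : {ffun 'I_n -> bool} -> R)
  (V : 'I_n.+1 -> S -> R) (gr_star gd_star : 'I_n.+1 -> S -> 'I_k) :
  (0 < n)%N -> (0 < k)%N ->
  0 < dem_p M < 1 ->
  0 < disc M < 1 ->
  (forall s u, 0 <= alpha M s u <= 1) ->
  (forall s u (j : 'I_n.+1), 0 < deliv M s u (mval R j) <= 1) ->
  (forall s u (j : 'I_n.+1), 0 <= c_res M s u (1 - mval R j)) ->
  (forall s u (j : 'I_n.+1), 0 <= c_dem M s u (mval R j)) ->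
  (forall (j : 'I_n.+1) th, 0 <= th <= 1 -> 0 <= dist M (mval R j) th) ->
  (forall s, 0 <= h_traj M s <= 1) ->
  (forall x, 0 <= P0 x) -> \sum_x P0 x = 1 ->
  (* V is the (bounded) solution of the dynamic program *)
  (exists B : R, forall j s, `|V j s| <= B) ->
  (forall j s, (forall gr gd, V j s <= bellman_rhs M V j s gr gd) /\
               exists gr gd, V j s = bellman_rhs M V j s gr gd) ->
  (* (gr_star, gd_star) is a minimizer *)
  (forall j s gr gd, bellman_rhs M V j s (gr_star j s) (gd_star j s)
                     <= bellman_rhs M V j s gr gd) ->
  forall g : strategy n k, (J M P0 (g_star M gr_star gd_star) <= J M P0 g)%E.
Proof.
move=> n_gt0 _ /andP[p_gt0 p_lt1] /andP[disc_gt0 disc_lt1] alpha01 deliv_pos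
  c_res_ge0 c_dem_ge0 dist_ge0 h_traj01 P0_ge0 P0_sum1 [B V_bounded] V_bellman rhs_min g.
have dem_p01 : 0 <= dem_p M <= 1 by rewrite !ltW.
have deliv01 s u (j : 'I_n.+1) : 0 <= deliv M s u (mval R j) <= 1.
  by have /andP[q_gt0 q_le1] := deliv_pos s u j; rewrite ltW.
have disc01 : 0 <= disc M < 1 by rewrite ltW.
have V_sub : bellman_subsolution M V := fun j s => (V_bellman j s).1.
have g_star_greedy := g_star_bellman_greedy V_sub (fun j s => (V_bellman j s).2) rhs_min.
rewrite /J (eseries_eq_of_geometric_bound disc01 (discounted_Ecost_dist dem_p01 alpha01
  deliv01 n_gt0 P0_ge0 P0_sum1 V_bounded (ltW disc_gt0) g_star_greedy)).
apply: (eseries_ge_of_geometric_bound disc01) => [t|N].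
  by rewrite mulr_ge0 ?exprn_ge0 ?(ltW disc_gt0) ?(Ecost_ge0 dem_p01 alpha01 deliv01
    c_res_ge0 c_dem_ge0 dist_ge0 h_traj01 g t P0_ge0).
exact: (discounted_Ecost_ge dem_p01 alpha01 deliv01 g n_gt0 P0_ge0 P0_sum1 V_bounded
  (ltW disc_gt0) V_sub).
Qed.
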